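(* Fix finite alphabets $\mathcal{X},\mathcal{Y},\mathcal{Z}$. The map sending a joint distribution $\mathcal{D}_{X,Y,Z}$ on $\mathcal{X}\times\mathcal{Y}\times\mathcal{Z}$ (an element of the probability simplex in $\mathbb{R}^{|\mathcal{X}|\times|\mathcal{Y}|\times|\mathcal{Z}|}$, with the Euclidean topology) to $\operatorname{Red}(X,Y\to Z)\in\mathbb{R}$ is continuous, where $\operatorname{Red}$ is the redundant information defined below.
   Context: For $(X,Y,Z)$ with joint distribution $\mathcal{D}_{X,Y,Z}$ and each $y\in\mathcal{Y}$ with $\Pr(Y=y)>0$, let $(A_y,B_y,C_y)$ be the random triple on $\mathcal{X}\times\mathcal{Y}\times\mathcal{Z}$ with $\Pr(A_y=x,B_y=y',C_y=z)=0$ if $\Pr(Z=z)=0$ and $\Pr(A_y=x,B_y=y',C_y=z)=\Pr(X=x,Y=y',Z=z)\Pr(Z=z\mid Y=y)/\Pr(Z=z)$ otherwise. The unique information is $\operatorname{Un}(X\to Z\mid Y)=\sum_{y:\Pr(Y=y)>0}\Pr(Y=y)\,I(A_y;C_y)$ and the redundant information is $\operatorname{Red}(X,Y\to Z)=I(X;Z)-\operatorname{Un}(X\to Z\mid Y)$, where $I$ is mutual information. *)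

From mathcomp Require Import all_boot all_order all_algebra.
From mathcomp Require Import reals exp.
Set Implicit Arguments. Unset Strict Implicit. Unset Printing Implicit Defensive.
Import Order.TTheory GRing.Theory Num.Theory.
Local Open Scope ring_scope.

Section Defs.
Variables (R : realType) (X Y Z : finType).

Definition is_dist (p : X -> Y -> Z -> R) : Prop :=
  (forall x y z, 0 <= p x y z) /\ \sum_x \sum_y \sum_z p x y z = 1.

Definition mutinf (r : X -> Z -> R) : R :=
  \sum_x \sum_z
    (if r x z == 0 then 0
     else r x z * ln (r x z / ((\sum_z' r x z') * (\sum_x' r x' z)))).

Definition pY (p : X -> Y -> Z -> R) (y : Y) : R := \sum_x \sum_z p x y z.
Definition pZ (p : X -> Y -> Z -> R) (z : Z) : R := \sum_x \sum_y p x y z.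
Definition pYZ (p : X -> Y -> Z -> R) (y : Y) (z : Z) : R := \sum_x p x y z.

Definition tilt (p : X -> Y -> Z -> R) (y : Y) : X -> Y -> Z -> R :=
  fun x y' z => if pZ p z == 0 then 0
                else p x y' z * (pYZ p y z / pY p y) / pZ p z.

Definition IAC (p : X -> Y -> Z -> R) (y : Y) : R :=
  mutinf (fun x z => \sum_y' tilt p y x y' z).

Definition Un (p : X -> Y -> Z -> R) : R :=
  \sum_(y | pY p y != 0) pY p y * IAC p y.

Definition Red (p : X -> Y -> Z -> R) : R :=
  mutinf (fun x z => \sum_y p x y z) - Un p.

End Defs.

From mathcomp Require Import all_boot all_order all_algebra.
From mathcomp Require Import boolp classical_sets filter topology normedtype.
From mathcomp Require Import reals exp realfun.
From mathcomp Require Import ring lra.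
Import Order.TTheory GRing.Theory Num.Theory.
Import numFieldNormedType.Exports.
Local Open Scope ring_scope.
Local Open Scope classical_set_scope.

(* With [xlnx t = t ln t], continuous on all of [R] since [ln t = 0] for [t <= 0],
   mutual information is a signed sum of [xlnx] of entries and marginals.  Made
   homogeneous of degree 1 ([mutinf_hom]), it turns [Pr(Y = y) I(A_y; C_y)] into
   [mutinf_hom] of the unnormalised array [T_y(x, z) = p(x, z) p(y, z) / p(z)], so
   the division by [Pr(Y = y)] disappears.  What is left is a finite sum of [xlnx]
   of continuous functions, except for the division by [p(z)], which is harmless
   because [0 <= T_y(x, z) <= p(y, z)]. *)

Section xlnx.
Context {R : realType}.
Implicit Types a b t : R.

Definition xlnx t := t * ln t.

Lemma xlnx0 : xlnx 0 = 0. Proof. by rewrite /xlnx mul0r. Qed.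

Lemma xlnx1 : xlnx 1 = 0. Proof. by rewrite /xlnx ln1 mulr0. Qed.

Lemma xlnx_le0 t : t <= 1 -> xlnx t <= 0.
Proof.
move=> t_le1; have [t_le0|t_gt0] := leP t 0; first by rewrite /xlnx ln0 ?mulr0.
by rewrite /xlnx mulr_ge0_le0 ?ln_le0 // ltW.
Qed.

Lemma xlnxM a b : 0 <= a -> 0 <= b -> xlnx (a * b) = a * xlnx b + b * xlnx a.
Proof.
rewrite le_eqVlt => /predU1P[<-|a_gt0]; first by rewrite !(mul0r, mulr0, xlnx0, addr0, add0r).
rewrite le_eqVlt => /predU1P[<-|b_gt0]; first by rewrite !(mul0r, mulr0, xlnx0, addr0, add0r).
by rewrite /xlnx lnM ?posrE //; ring.
Qed.

(* [ln u < u] at [u = 1 / sqrt t]. *)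
Lemma xlnx_ge_sqrt t : - (2 * Num.sqrt t) <= xlnx t.
Proof.
have [t_le0|t_gt0] := leP t 0; first by rewrite /xlnx ln0 // ler0_sqrtr // !mulr0 oppr0.
set s := Num.sqrt t; have s_gt0 : 0 < s by rewrite sqrtr_gt0.
have tE : t = s ^+ 2 by rewrite sqr_sqrtr ?ltW.
have : ln s^-1 < s^-1 by apply: ln_sublinear; rewrite invr_gt0.
rewrite lnV ?posrE // -(ltr_pM2l s_gt0) mulfV ?gt_eqF // => lt_s.
rewrite /xlnx tE lnXn // expr2; nra.
Qed.

Lemma xlnx_continuous : continuous xlnx.
Proof.
move=> x; have [x_le0|x_gt0] := leP x 0; last first.
  by apply: cvgM; [exact: cvg_id | exact: continuous_ln].
have lower_cvg : - (2 * Num.sqrt t) @[t --> x] --> - (2 * Num.sqrt x).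
  by apply: cvgN; apply: cvgMl_tmp; exact: sqrt_continuous.
rewrite ler0_sqrtr // mulr0 oppr0 in lower_cvg.
rewrite /continuous_at; have -> : xlnx x = 0 by rewrite /xlnx ln0 ?mulr0.
apply: (squeeze_cvgr _ lower_cvg (cvg_cst 0)).
near=> t; rewrite xlnx_ge_sqrt xlnx_le0 //; apply: ltW; near: t.
by apply: (cvgr_lt x); [exact: cvg_id | lra].
Unshelve. all: by end_near. Qed.

Lemma cvg_xlnx {T : Type} (F : set_system T) {FF : Filter F} (f : T -> R) a :
  f @ F --> a -> xlnx (f t) @[t --> F] --> xlnx a.
Proof. exact: continuous_cvg (xlnx_continuous a). Qed.

End xlnx.

Lemma cvg_sum {R : realType} {T I : Type} (F : set_system T) {FF : Filter F}
    (s : seq I) (f : I -> T -> R) (a : I -> R) :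
  (forall i, f i t @[t --> F] --> a i) ->
  \sum_(i <- s) f i t @[t --> F] --> \sum_(i <- s) a i.
Proof. by move=> f_cvg; apply: cvg_big => //; exact: add_continuous. Qed.

Section homogeneous_mutinf.
Context {R : realType} {X Z : finType}.
Implicit Types r : X -> Z -> R.

(* The entropy form of [mutinf], made homogeneous of degree 1 by the last term. *)
Definition mutinf_hom r : R :=
  \sum_x \sum_z xlnx (r x z) - \sum_x xlnx (\sum_z r x z)
  - \sum_z xlnx (\sum_x r x z) + xlnx (\sum_x \sum_z r x z).

Lemma mutinfE r : (forall x z, 0 <= r x z) ->
  mutinf r = mutinf_hom r - xlnx (\sum_x \sum_z r x z).
Proof.
move=> r_ge0; rewrite /mutinf /mutinf_hom addrK.
have termE x z : (if r x z == 0 then 0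
    else r x z * ln (r x z / ((\sum_z' r x z') * (\sum_x' r x' z)))) =
    xlnx (r x z) - r x z * ln (\sum_z' r x z') - r x z * ln (\sum_x' r x' z).
  have [->|rxz_neq0] := eqVneq (r x z) 0; first by rewrite xlnx0 !mul0r !subr0.
  have rxz_gt0 : 0 < r x z by rewrite lt_def rxz_neq0 r_ge0.
  have row_gt0 : 0 < \sum_z' r x z'.
    by apply: lt_le_trans rxz_gt0 _; rewrite (bigD1 z) //= lerDl sumr_ge0.
  have col_gt0 : 0 < \sum_x' r x' z.
    by apply: lt_le_trans rxz_gt0 _; rewrite (bigD1 x) //= lerDl sumr_ge0.
  by rewrite ln_div ?lnM ?posrE ?mulr_gt0 // /xlnx; ring.
under eq_bigr => x _ do under eq_bigr => z _ do rewrite termE.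
under eq_bigr => x _ do rewrite !sumrB.
rewrite !sumrB; congr (_ - _ - _); first by apply: eq_bigr => x _; rewrite -mulr_suml.
by rewrite exchange_big; apply: eq_bigr => z _; rewrite -mulr_suml.
Qed.

(* [xlnx (c * a) = c * xlnx a + a * xlnx c], and the [xlnx c] terms cancel. *)
Lemma mutinf_homZ c r : 0 <= c -> (forall x z, 0 <= r x z) ->
  mutinf_hom (fun x z => c * r x z) = c * mutinf_hom r.
Proof.
move=> c_ge0 r_ge0; rewrite /mutinf_hom.
have sumZ (I : finType) (f : I -> R) : \sum_i c * f i = c * \sum_i f i by rewrite mulr_sumr.
have sum_ge0 (I : finType) (f : I -> R) : (forall i, 0 <= f i) -> 0 <= \sum_i f i.
  by move=> f_ge0; apply: sumr_ge0.
under eq_bigr => x _ do under eq_bigr => z _ do rewrite xlnxM //.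
under eq_bigr => x _ do rewrite big_split /= -mulr_sumr -mulr_suml.
under [\sum_x xlnx _]eq_bigr => x _ do rewrite sumZ xlnxM ?sum_ge0 //.
under [\sum_z xlnx _]eq_bigr => z _ do rewrite sumZ xlnxM ?sum_ge0 //.
under [in xlnx (\sum_x _)]eq_bigr => x _ do rewrite sumZ.
rewrite sumZ xlnxM ?sum_ge0 // => [|x]; last exact: sum_ge0.
rewrite !big_split /= -!mulr_sumr -!mulr_suml [\sum_z \sum_x r x z]exchange_big.
ring.
Qed.

Lemma mutinf_hom0 : mutinf_hom (fun _ _ => 0) = 0.
Proof. by rewrite /mutinf_hom !(big1_eq, xlnx0) !subr0 addr0. Qed.

Lemma mutinf_hom_scaled w r : 0 < w -> (forall x z, 0 <= r x z) ->
  \sum_x \sum_z r x z = w -> w * mutinf (fun x z => r x z / w) = mutinf_hom r.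
Proof.
move=> w_gt0 r_ge0 r_sum.
have -> : (fun x z => r x z / w) = (fun x z => w^-1 * r x z).
  by apply: funext => x; apply: funext => z; rewrite mulrC.
rewrite mutinfE; last by move=> x z; rewrite mulr_ge0 ?invr_ge0 // ltW.
rewrite mutinf_homZ ?invr_ge0 ?ltW //.
under eq_bigr => x _ do rewrite -mulr_sumr.
by rewrite -mulr_sumr r_sum mulVf ?gt_eqF // xlnx1 subr0 mulrA mulfV ?gt_eqF // mul1r.
Qed.

Lemma mutinf_hom_cvg {T : Type} (F : set_system T) {FF : Filter F}
    (r : T -> X -> Z -> R) r0 :
  (forall x z, r t x z @[t --> F] --> r0 x z) ->
  mutinf_hom (r t) @[t --> F] --> mutinf_hom r0.
Proof.
move=> r_cvg; rewrite /mutinf_hom.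
by repeat first [exact: r_cvg | apply: cvgB | apply: cvgD | apply: cvg_xlnx | apply: cvg_sum => ?].
Qed.

End homogeneous_mutinf.

Section tilt_decomposition.
Context {R : realType} {X Y Z : finType}.
Implicit Types q : X -> Y -> Z -> R.

Definition pXZ q x z := \sum_y q x y z.

(* [Pr(Y = y) Pr(A_y = x, C_y = z)], which needs no division by [Pr(Y = y)]. *)
Definition tilt_mass q y x z := pXZ q x z * pYZ q y z / pZ q z.

Lemma tilt_marginalE q y x z :
  \sum_y' tilt q y x y' z = tilt_mass q y x z / pY q y.
Proof.
rewrite /tilt /tilt_mass; have [pZ0|_] := eqVneq (pZ q z) 0.
  by rewrite big1 // pZ0 invr0 !mulr0 mul0r.
by rewrite -!mulr_suml -/(pXZ q x z) mulrA mulrAC.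
Qed.

Lemma sum_pYZ q y : \sum_z pYZ q y z = pY q y.
Proof. by rewrite /pY exchange_big. Qed.

Section nonneg.
Variable q : X -> Y -> Z -> R.
Hypothesis q_ge0 : forall x y z, 0 <= q x y z.

Lemma pXZ_ge0 x z : 0 <= pXZ q x z. Proof. exact: sumr_ge0. Qed.

Lemma pYZ_ge0 y z : 0 <= pYZ q y z. Proof. exact: sumr_ge0. Qed.

Lemma pZ_ge0 z : 0 <= pZ q z.
Proof. by apply: sumr_ge0 => x _; exact: pXZ_ge0. Qed.

Lemma pXZ_le_pZ x z : pXZ q x z <= pZ q z.
Proof. by rewrite /pZ (bigD1 x) //= lerDl sumr_ge0 // => x' _; exact: pXZ_ge0. Qed.

Lemma pYZ_le_pZ y z : pYZ q y z <= pZ q z.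
Proof. by apply: ler_sum => x _; rewrite (bigD1 y) //= lerDl sumr_ge0. Qed.

Lemma tilt_mass_ge0 y x z : 0 <= tilt_mass q y x z.
Proof. by rewrite divr_ge0 ?mulr_ge0 ?pXZ_ge0 ?pYZ_ge0 ?pZ_ge0. Qed.

Lemma tilt_mass_le_pYZ y x z : tilt_mass q y x z <= pYZ q y z.
Proof.
rewrite /tilt_mass; have [pZ0|pZ_neq0] := eqVneq (pZ q z) 0.
  by rewrite pZ0 invr0 mulr0 pYZ_ge0.
have pZ_gt0 : 0 < pZ q z by rewrite lt_def pZ_neq0 pZ_ge0.
by rewrite ler_pdivrMr // mulrC ler_wpM2l ?pYZ_ge0 ?pXZ_le_pZ.
Qed.

Lemma sum_tilt_mass y z : \sum_x tilt_mass q y x z = pYZ q y z.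
Proof.
rewrite /tilt_mass -!mulr_suml -/(pZ q z).
have [pZ0|pZ_neq0] := eqVneq (pZ q z) 0; last by rewrite mulrAC divff ?mul1r.
have pYZ0 : pYZ q y z = 0 by apply/le_anti; rewrite pYZ_ge0 -pZ0 pYZ_le_pZ.
by rewrite pYZ0 mulr0 mul0r.
Qed.

Lemma tilt_mass_total y : \sum_x \sum_z tilt_mass q y x z = pY q y.
Proof.
by rewrite exchange_big -sum_pYZ; apply: eq_bigr => z _; rewrite sum_tilt_mass.
Qed.

Lemma mutinf_hom_tilt_pY0 y : pY q y = 0 -> mutinf_hom (tilt_mass q y) = 0.
Proof.
move=> pY0; have pYZ0 z : pYZ q y z = 0.
  by apply: (@psumr_eq0P _ _ xpredT) => // [z' _|]; [exact: pYZ_ge0 | rewrite sum_pYZ].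
have -> : tilt_mass q y = fun _ _ => 0.
  by apply: funext => x; apply: funext => z; rewrite /tilt_mass pYZ0 mulr0 mul0r.
exact: mutinf_hom0.
Qed.

Lemma pY_IAC y : pY q y != 0 -> pY q y * IAC q y = mutinf_hom (tilt_mass q y).
Proof.
move=> pY_neq0; have pY_gt0 : 0 < pY q y by rewrite lt_def pY_neq0 sumr_ge0 // => x _; exact: sumr_ge0.
rewrite /IAC (_ : (fun x z => _) = (fun x z => tilt_mass q y x z / pY q y)).
  by rewrite mutinf_hom_scaled // ?tilt_mass_total // => x z; exact: tilt_mass_ge0.
by apply: funext => x; apply: funext => z; rewrite tilt_marginalE.
Qed.

Lemma UnE : Un q = \sum_y mutinf_hom (tilt_mass q y).
Proof.
rewrite /Un big_mkcond; apply: eq_bigr => y _.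
by case: ifPn => [/pY_IAC //|/negPn/eqP pY0]; rewrite mutinf_hom_tilt_pY0.
Qed.

Lemma RedE : Red q = mutinf_hom (pXZ q) - xlnx (\sum_x \sum_z pXZ q x z)
                     - \sum_y mutinf_hom (tilt_mass q y).
Proof. by rewrite /Red UnE mutinfE //; exact: pXZ_ge0. Qed.

End nonneg.
End tilt_decomposition.

Section Red_continuity.
Context {R : realType} {X Y Z : finType}.
Variables (F : set_system (X -> Y -> Z -> R)) (p : X -> Y -> Z -> R).
Context {FF : Filter F}.
Hypothesis p_ge0 : forall x y z, 0 <= p x y z.
Hypothesis F_ge0 : \forall q \near F, forall x y z, 0 <= q x y z.
Hypothesis F_cvg : forall x y z, q x y z @[q --> F] --> p x y z.

Lemma pXZ_cvg x z : pXZ q x z @[q --> F] --> pXZ p x z.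
Proof. exact: cvg_sum. Qed.

Lemma pYZ_cvg y z : pYZ q y z @[q --> F] --> pYZ p y z.
Proof. exact: cvg_sum. Qed.

Lemma pZ_cvg z : pZ q z @[q --> F] --> pZ p z.
Proof. by apply: cvg_sum => x; exact: pXZ_cvg. Qed.

(* Where [pZ p z = 0] the division is discontinuous, but [0 <= tilt_mass <= pYZ]
   squeezes [tilt_mass] to [0]. *)
Lemma tilt_mass_cvg y x z : tilt_mass q y x z @[q --> F] --> tilt_mass p y x z.
Proof.
have [pZ0|pZ_neq0] := eqVneq (pZ p z) 0; last first.
  apply: cvgM; last exact: cvgV (pZ_cvg z).
  by apply: cvgM; [exact: pXZ_cvg | exact: pYZ_cvg].
have pYZ_cvg0 : pYZ q y z @[q --> F] --> 0.
  have pYZ0 : pYZ p y z = 0 by apply/le_anti; rewrite pYZ_ge0 // -pZ0 pYZ_le_pZ.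
  by rewrite -pYZ0; exact: pYZ_cvg.
rewrite /tilt_mass pZ0 invr0 mulr0.
apply: (squeeze_cvgr _ (cvg_cst 0) pYZ_cvg0).
by apply: filterS F_ge0 => q q_ge0; rewrite tilt_mass_ge0 ?tilt_mass_le_pYZ.
Qed.

Lemma Red_cvg : Red q @[q --> F] --> Red p.
Proof.
have RHS_cvg : mutinf_hom (pXZ q) - xlnx (\sum_x \sum_z pXZ q x z)
    - \sum_y mutinf_hom (tilt_mass q y) @[q --> F] -->
    mutinf_hom (pXZ p) - xlnx (\sum_x \sum_z pXZ p x z)
    - \sum_y mutinf_hom (tilt_mass p y).
  apply: cvgB; last by apply: cvg_sum => y; apply: mutinf_hom_cvg; exact: tilt_mass_cvg.
  apply: cvgB; first by apply: mutinf_hom_cvg; exact: pXZ_cvg.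
  by apply: cvg_xlnx; apply: cvg_sum => x; apply: cvg_sum => z; exact: pXZ_cvg.
rewrite (RedE _ p_ge0); apply: cvg_trans RHS_cvg; apply: near_eq_cvg.
by apply: filterS F_ge0 => q q_ge0; rewrite RedE.
Qed.

End Red_continuity.

Definition simplex_nbhs {R : realType} {X Y Z : finType} (p : X -> Y -> Z -> R) :=
  filter_from [set d : R | 0 < d]
    (fun d => [set q | is_dist q /\ forall x y z, `|p x y z - q x y z| < d]).

Instance simplex_nbhs_filter {R : realType} {X Y Z : finType} (p : X -> Y -> Z -> R) :
  Filter (simplex_nbhs p).
Proof.
apply: filter_from_filter; first by exists 1; exact: ltr01.
move=> d1 d2 d1_gt0 d2_gt0; exists (Num.min d1 d2); first by rewrite /= lt_min d1_gt0.
move=> q [q_dist pq]; split; split=> // x y z; have := pq x y z; by rewrite lt_min => /andP[].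
Qed.

Theorem lemma9 (R : realType) (X Y Z : finType) (p : X -> Y -> Z -> R) :
  is_dist p ->
  forall eps : R, 0 < eps ->
  exists2 delta : R, 0 < delta &
    forall q : X -> Y -> Z -> R, is_dist q ->
      (forall x y z, `|p x y z - q x y z| < delta) ->
      `|Red p - Red q| < eps.
Proof.
move=> [p_ge0 _] eps eps_gt0.
have F_ge0 : \forall q \near simplex_nbhs p, forall x y z, 0 <= q x y z.
  by exists 1 => [|q [[]]]; [exact: ltr01|].
have F_cvg x y z : q x y z @[q --> simplex_nbhs p] --> p x y z.
  by apply/cvgrPdist_lt => e e_gt0; exists e => // q [].
have [d d_gt0 Red_near] := cvgr_dist_lt _ _ (Red_cvg _ _ p_ge0 F_ge0 F_cvg) _ eps_gt0.
by exists d => // q q_dist pq; exact: (Red_near q (conj q_dist pq)).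
Qed.
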